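(* There exists a family of smooth functions $\{\varphi_t:[0,\frac{\pi}{2}]\to[0,1]\}_{t\in(0,1]}$, depending continuously on $t$, such that for each $t\in(0,1]$: (1) all even-order derivatives of $\varphi_t$ vanish at $0$, $\varphi_t'(0)=1$, all odd-order derivatives of $\varphi_t$ vanish at $\frac{\pi}{2}$, and $\varphi_t(\frac{\pi}{2})>0$; (2) $\varphi_t(r)\le 3t\sin(r)$ for all $r\in(t,\frac{\pi}{2}]$; (3) on $(0,\frac{\pi}{2})$, $$\frac{-\varphi_t''}{\varphi_t}\ \ge\ \tan\cdot\frac{\varphi_t'}{\varphi_t}\ \ge\ \max\{t,1-t\}.$$
   Context: Here $\tan\cdot\frac{\varphi_t'}{\varphi_t}$ denotes the function $r\mapsto\tan(r)\varphi_t'(r)/\varphi_t(r)$. *)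

From Stdlib Require Import Reals Lra.
From Coquelicot Require Import Coquelicot.
Open Scope R_scope.

(* A function on [0, PI/2] is smooth if it is the restriction of a C^oo
   function on R (equivalently, all one-sided derivatives exist and are
   continuous up to the boundary). *)
Definition smooth_R (f : R -> R) : Prop :=
  forall (n : nat) (x : R), ex_derive_n f n x.

(* The family t |-> phi t depends continuously on t in the C^oo topology
   on [0, PI/2]: every derivative (t, r) |-> phi_t^(k)(r) is jointly
   continuous on (0,1] x [0, PI/2]. *)
Definition family_continuous (phi : R -> R -> R) : Prop :=
  forall (k : nat) (t r : R), 0 < t <= 1 -> 0 <= r <= PI / 2 ->
  forall eps : R, 0 < eps -> exists delta : R, 0 < delta /\
    forall t' r' : R, 0 < t' <= 1 -> 0 <= r' <= PI / 2 ->
      Rabs (t' - t) < delta -> Rabs (r' - r) < delta ->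
      Rabs (Derive_n (phi t') k r' - Derive_n (phi t) k r) < eps.

From Stdlib Require Import Reals Lra.
From Coquelicot Require Import Coquelicot.
Open Scope R_scope.

(* Take phi t r = sin r * (1 + kappa t * sin r ^ 2) ^ (- beta t) with
   beta t = t (1 - t) / 2 and kappa t = exp (3 / t ^ 2) / sin t ^ 2.
   It is odd about 0 and even about PI/2, which gives the boundary conditions
   by reflecting derivatives.  With u = kappa sin^2 / (1 + kappa sin^2) in
   [0, 1], a direct computation gives tan * phi' / phi = 1 - 2 beta u, at least
   1 - t (1 - t) >= max t (1 - t), and
   - phi'' / phi - tan * phi' / phi
     = 2 beta kappa cos^2 (3 + (1 - 2 beta) kappa sin^2) / (1 + kappa sin^2)^2,
   which is nonnegative.  For r > t the factor kappa t forces
   ln (1 + kappa sin^2 r) >= 3 / t^2, so for t <= 1/3 the damping factor is at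
   most exp (- 1 / t) < t.  Every r-derivative of phi is an expression in
   beta, kappa, sin, cos, the damping factor and 1 / (1 + kappa sin^2), all
   jointly continuous in (t, r), which gives continuity of the family. *)

Lemma Derive_n_reflect (f : R -> R) (a s : R) (n : nat) (x : R) :
  smooth_R f -> (forall y, f (a - y) = s * f y) ->
  (-1) ^ n * Derive_n f n (a - x) = s * Derive_n f n x.
Proof.
  intros Hf Hsym.
  rewrite <- (Derive_n_scal_l f n s x),
    (Derive_n_ext (fun y => s * f y) (fun y => f (- y + a)))
    by (intros y; rewrite <- Hsym; f_equal; ring).
  rewrite (Derive_n_comp_opp (fun y => f (y + a))).
  - rewrite Derive_n_comp_trans. f_equal. f_equal. ring.
  - apply filter_forall. intros y k _. apply ex_derive_n_comp_trans, Hf.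
Qed.

Lemma odd_fun_Derive_n_even_0 (f : R -> R) (k : nat) :
  smooth_R f -> (forall y, f (- y) = - f y) -> Derive_n f (2 * k) 0 = 0.
Proof.
  intros Hf Hodd.
  assert (H := Derive_n_reflect f 0 (-1) (2 * k) 0 Hf).
  rewrite pow_mult, Rminus_0_r in H.
  assert (Hsym : forall y, f (0 - y) = -1 * f y) by (intros y; rewrite Rminus_0_l, Hodd; ring).
  specialize (H Hsym). replace ((-1) ^ 2) with 1 in H by ring. rewrite pow1 in H. lra.
Qed.

Lemma symmetric_fun_Derive_n_odd_center (f : R -> R) (c : R) (k : nat) :
  smooth_R f -> (forall y, f (c + y) = f (c - y)) -> Derive_n f (2 * k + 1) c = 0.
Proof.
  intros Hf Hsym.
  assert (Hrefl : forall y, f (2 * c - y) = 1 * f y).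
  { intros y. replace (2 * c - y) with (c + (c - y)) by ring.
    rewrite Hsym, Rmult_1_l. f_equal. ring. }
  assert (H := Derive_n_reflect f (2 * c) 1 (2 * k + 1) c Hf Hrefl).
  replace (2 * c - c) with c in H by ring.
  rewrite pow_add, pow_mult in H. replace ((-1) ^ 2) with 1 in H by ring.
  rewrite pow1 in H. lra.
Qed.

Lemma family_continuous_of_continuous_Derive_n (F : R -> R -> R) :
  (forall k t r, 0 < t <= 1 ->
     continuous (fun p : R * R => Derive_n (F (fst p)) k (snd p)) (t, r)) ->
  family_continuous F.
Proof.
  intros Hc k t r Ht _ eps Heps.
  destruct (proj1 (filterlim_locally _ _) (Hc k t r Ht) (mkposreal eps Heps)) as [d Hd].
  exists d. split; [apply cond_pos |].
  intros t' r' _ _ Ht' Hr'. apply (Hd (t', r')). split; assumption.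
Qed.

Lemma exp_le_compat (x y : R) : x <= y -> exp x <= exp y.
Proof. intros [Hlt | ->]; [left; now apply exp_increasing | right; reflexivity]. Qed.

Lemma exp_neg_inv_lt (x : R) : 0 < x -> exp (- / x) < x.
Proof.
  intros Hx. assert (Hix : 0 < / x) by now apply Rinv_0_lt_compat.
  rewrite exp_Ropp. pose proof (exp_ineq1 (/ x) ltac:(lra)).
  rewrite <- (Rinv_inv x) at 2. apply Rinv_lt_contravar; nra.
Qed.

Lemma Rmax_le_1_sub_mul (t : R) : Rmax t (1 - t) <= 1 - t * (1 - t).
Proof. pose proof (pow2_ge_0 t). pose proof (pow2_ge_0 (1 - t)). apply Rmax_lub; nra. Qed.

Definition beta (t : R) : R := t * (1 - t) / 2.

Definition kappa (t : R) : R := exp (3 / t ^ 2) / sin t ^ 2.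

Definition den (t r : R) : R := 1 + kappa t * sin r ^ 2.

Definition damp (t r : R) : R := exp (- beta t * ln (den t r)).

Definition phi (t r : R) : R := sin r * damp t r.

Lemma kappa_ge0 (t : R) : 0 <= kappa t.
Proof.
  unfold kappa, Rdiv. rewrite <- (pow_inv (sin t)).
  apply Rmult_le_pos; [left; apply exp_pos | apply pow2_ge_0].
Qed.

Lemma den_pos (t r : R) : 0 < den t r.
Proof.
  unfold den. pose proof (kappa_ge0 t). pose proof (pow2_ge_0 (sin r)). nra.
Qed.

Lemma damp_pos (t r : R) : 0 < damp t r.
Proof. apply exp_pos. Qed.

Inductive expr :=
  | Const (c : R) | Beta | Kappa | Sin | Cos | Inv_den | Damp
  | Add (e1 e2 : expr) | Mul (e1 e2 : expr).

Fixpoint eval (e : expr) (t r : R) : R :=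
  match e with
  | Const c => c
  | Beta => beta t
  | Kappa => kappa t
  | Sin => sin r
  | Cos => cos r
  | Inv_den => / den t r
  | Damp => damp t r
  | Add e1 e2 => eval e1 t r + eval e2 t r
  | Mul e1 e2 => eval e1 t r * eval e2 t r
  end.

Fixpoint deriv (e : expr) : expr :=
  match e with
  | Const _ | Beta | Kappa => Const 0
  | Sin => Cos
  | Cos => Mul (Const (-1)) Sin
  | Inv_den => Mul (Const (-2)) (Mul Kappa (Mul Sin (Mul Cos (Mul Inv_den Inv_den))))
  | Damp => Mul (Const (-2)) (Mul Beta (Mul Kappa (Mul Sin (Mul Cos (Mul Inv_den Damp)))))
  | Add e1 e2 => Add (deriv e1) (deriv e2)
  | Mul e1 e2 => Add (Mul (deriv e1) e2) (Mul e1 (deriv e2))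
  end.

Lemma phi_eval : phi = eval (Mul Sin Damp).
Proof. reflexivity. Qed.

Lemma is_derive_eval (e : expr) (t r : R) :
  is_derive (eval e t) r (eval (deriv e) t r).
Proof.
  pose proof (den_pos t r) as Hden.
  induction e; simpl; unfold damp, den in *.
  1-5: auto_derive; auto; ring.
  1-2: auto_derive; [lra |];
    replace (sin r * (sin r * 1)) with (sin r ^ 2) by ring; field; lra.
  - exact (is_derive_plus _ _ _ _ _ IHe1 IHe2).
  - exact (is_derive_mult _ _ _ _ _ IHe1 IHe2 Rmult_comm).
Qed.

Lemma Derive_n_eval (e : expr) (t : R) (n : nat) (r : R) :
  Derive_n (eval e t) n r = eval (Nat.iter n deriv e) t r.
Proof.
  revert r. induction n as [| n IHn]; intros r; [reflexivity |].
  simpl. rewrite (Derive_ext _ _ _ IHn). apply is_derive_unique, is_derive_eval.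
Qed.

Lemma smooth_R_eval (e : expr) (t : R) : smooth_R (eval e t).
Proof.
  intros [| n] r; [exact I |]. simpl.
  apply (ex_derive_ext (eval (Nat.iter n deriv e) t)).
  - intros y. symmetry. apply Derive_n_eval.
  - eexists. apply is_derive_eval.
Qed.

Lemma continuous_comp_derivable (g : R -> R) (f : R * R -> R) (p : R * R) :
  continuous f p -> ex_derive g (f p) -> continuous (fun q => g (f q)) p.
Proof.
  intros Hf Hg. apply continuous_comp; [exact Hf |].
  exact (ex_derive_continuous g _ Hg).
Qed.

Lemma continuous_fst_derivable (g : R -> R) (t r : R) :
  ex_derive g t -> continuous (fun p : R * R => g (fst p)) (t, r).
Proof. intros Hg. apply continuous_comp_derivable; [apply continuous_fst | exact Hg]. Qed.

Lemma continuous_snd_derivable (g : R -> R) (t r : R) :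
  ex_derive g r -> continuous (fun p : R * R => g (snd p)) (t, r).
Proof. intros Hg. apply continuous_comp_derivable; [apply continuous_snd | exact Hg]. Qed.

Lemma ex_derive_kappa (t : R) : 0 < t < PI -> ex_derive kappa t.
Proof.
  intros Ht. assert (0 < sin t) by (apply sin_gt_0; lra).
  unfold kappa. auto_derive. repeat split; intro; nra.
Qed.

Lemma continuous_den (t r : R) : 0 < t < PI ->
  continuous (fun p : R * R => den (fst p) (snd p)) (t, r).
Proof.
  intros Ht. unfold den.
  apply (continuous_plus (fun _ => 1)); [apply continuous_const |].
  apply (continuous_mult (fun p => kappa (fst p)) (fun p => sin (snd p) ^ 2)).
  - apply continuous_fst_derivable, ex_derive_kappa, Ht.
  - apply (continuous_snd_derivable (fun y => sin y ^ 2)). auto_derive; auto.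
Qed.

Lemma continuous_eval (e : expr) (t r : R) : 0 < t < PI ->
  continuous (fun p : R * R => eval e (fst p) (snd p)) (t, r).
Proof.
  intros Ht. pose proof (den_pos t r) as Hden.
  induction e; simpl.
  - apply continuous_const.
  - apply continuous_fst_derivable. unfold beta. auto_derive; auto.
  - apply continuous_fst_derivable, ex_derive_kappa, Ht.
  - apply continuous_snd_derivable. auto_derive; auto.
  - apply continuous_snd_derivable. auto_derive; auto.
  - apply (continuous_comp_derivable Rinv (fun p => den (fst p) (snd p))).
    + apply continuous_den, Ht.
    + simpl. auto_derive. lra.
  - unfold damp. apply (continuous_comp_derivable exp).
    + apply (continuous_mult (fun p => - beta (fst p)) (fun p => ln (den (fst p) (snd p)))).
      * apply (continuous_fst_derivable (fun x => - beta x)). unfold beta. auto_derive; auto.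
      * apply (continuous_comp_derivable ln (fun p => den (fst p) (snd p))).
        -- apply continuous_den, Ht.
        -- simpl. auto_derive. lra.
    + auto_derive; auto.
  - exact (continuous_plus _ _ _ IHe1 IHe2).
  - exact (continuous_mult _ _ _ IHe1 IHe2).
Qed.

Lemma family_continuous_eval (e : expr) : family_continuous (eval e).
Proof.
  apply family_continuous_of_continuous_Derive_n. intros k t r Ht. pose proof PI2_1.
  apply (continuous_ext (fun p : R * R => eval (Nat.iter k deriv e) (fst p) (snd p))).
  - intros p. symmetry. apply Derive_n_eval.
  - apply continuous_eval. lra.
Qed.

Lemma phi_odd (t y : R) : phi t (- y) = - phi t y.
Proof.
  unfold phi, damp, den. rewrite sin_neg.
  replace ((- sin y) ^ 2) with (sin y ^ 2) by ring. ring.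
Qed.

Lemma phi_symmetric_PI2 (t y : R) : phi t (PI / 2 + y) = phi t (PI / 2 - y).
Proof. unfold phi, damp, den. rewrite <- cos_sin, sin_shift. reflexivity. Qed.

Lemma damp_0 (t : R) : damp t 0 = 1.
Proof.
  unfold damp, den. rewrite sin_0.
  replace (1 + kappa t * 0 ^ 2) with 1 by ring.
  rewrite ln_1, Rmult_0_r. apply exp_0.
Qed.

Lemma Derive_phi_0 (t : R) : Derive_n (phi t) 1 0 = 1.
Proof.
  rewrite phi_eval, Derive_n_eval. simpl. rewrite sin_0, cos_0, damp_0. ring.
Qed.

Lemma phi_PI2_pos (t : R) : 0 < phi t (PI / 2).
Proof. unfold phi. rewrite sin_PI2, Rmult_1_l. apply damp_pos. Qed.

Lemma beta_bounds (t : R) : 0 <= t <= 1 -> 0 <= beta t <= 1 / 8.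
Proof. intros Ht. unfold beta. pose proof (pow2_ge_0 (t - 1 / 2)). split; nra. Qed.

Lemma ln_den_ge0 (t r : R) : 0 <= ln (den t r).
Proof.
  rewrite <- ln_1. apply ln_le; [lra |].
  unfold den. pose proof (kappa_ge0 t). pose proof (pow2_ge_0 (sin r)). nra.
Qed.

Lemma damp_le_1 (t r : R) : 0 <= t <= 1 -> damp t r <= 1.
Proof.
  intros Ht. unfold damp. rewrite <- exp_0. apply exp_le_compat.
  pose proof (beta_bounds t Ht). pose proof (ln_den_ge0 t r). nra.
Qed.

Lemma ln_den_ge (t r : R) : 0 < t <= 1 -> t < r <= PI / 2 -> 3 / t ^ 2 <= ln (den t r).
Proof.
  intros Ht Hr. pose proof PI2_1.
  assert (Hsint : 0 < sin t) by (apply sin_gt_0; lra).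
  assert (Hsin : sin t <= sin r) by (apply sin_incr_1; lra).
  rewrite <- (ln_exp (3 / t ^ 2)). apply ln_le; [apply exp_pos |].
  assert (Hkappa : kappa t * sin t ^ 2 = exp (3 / t ^ 2)) by (unfold kappa; field; lra).
  unfold den. pose proof (kappa_ge0 t).
  assert (sin t ^ 2 <= sin r ^ 2) by nra. nra.
Qed.

Lemma damp_lt (t r : R) : 0 < t <= 1 / 3 -> t < r <= PI / 2 -> damp t r < t.
Proof.
  intros Ht Hr. apply Rle_lt_trans with (exp (- / t)); [| now apply exp_neg_inv_lt].
  unfold damp. apply exp_le_compat.
  pose proof (ln_den_ge t r ltac:(lra) Hr).
  assert (Hbeta : t / 3 <= beta t) by (unfold beta; nra).
  assert (Hinv : / t = t / 3 * (3 / t ^ 2)) by (field; lra).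
  assert (0 <= 3 / t ^ 2) by (apply Rdiv_le_0_compat; [lra | apply pow_lt; lra]).
  nra.
Qed.

Lemma damp_le_3t (t r : R) : 0 < t <= 1 -> t < r <= PI / 2 -> damp t r <= 3 * t.
Proof.
  intros Ht Hr. destruct (Rle_or_lt t (1 / 3)).
  - pose proof (damp_lt t r ltac:(lra) Hr). lra.
  - pose proof (damp_le_1 t r ltac:(lra)). lra.
Qed.

Lemma phi_range (t r : R) : 0 <= t <= 1 -> 0 <= r <= PI / 2 -> 0 <= phi t r <= 1.
Proof.
  intros Ht Hr. pose proof PI2_1.
  pose proof (damp_pos t r). pose proof (damp_le_1 t r Ht).
  assert (0 <= sin r) by (apply sin_ge_0; lra). pose proof (SIN_bound r).
  unfold phi. split; nra.
Qed.

Lemma phi_le_3t_sin (t r : R) : 0 < t <= 1 -> t < r <= PI / 2 -> phi t r <= 3 * t * sin r.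
Proof.
  intros Ht Hr. pose proof PI2_1. pose proof (damp_le_3t t r Ht Hr).
  assert (0 <= sin r) by (apply sin_ge_0; lra).
  unfold phi. nra.
Qed.

Lemma tan_log_derivative_phi (t r : R) : sin r <> 0 -> cos r <> 0 ->
  tan r * Derive_n (phi t) 1 r / phi t r
  = 1 - 2 * beta t * (kappa t * sin r ^ 2 / den t r).
Proof.
  intros Hs Hc. rewrite phi_eval, Derive_n_eval. simpl.
  pose proof (den_pos t r). pose proof (damp_pos t r).
  unfold tan. field. repeat split; lra.
Qed.

Lemma phi_curvature_gap (t r : R) : sin r <> 0 -> cos r <> 0 ->
  - Derive_n (phi t) 2 r / phi t r - tan r * Derive_n (phi t) 1 r / phi t r
  = 2 * beta t * kappa t * cos r ^ 2 * (3 + (1 - 2 * beta t) * kappa t * sin r ^ 2)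
    / den t r ^ 2.
Proof.
  intros Hs Hc. rewrite phi_eval, !Derive_n_eval. simpl.
  pose proof (den_pos t r). pose proof (damp_pos t r).
  unfold tan, den in *. field. repeat split; lra.
Qed.

Lemma kappa_sin2_div_den_bounds (t r : R) : 0 <= kappa t * sin r ^ 2 / den t r <= 1.
Proof.
  pose proof (den_pos t r) as Hden. pose proof (kappa_ge0 t). pose proof (pow2_ge_0 (sin r)).
  split.
  - apply Rdiv_le_0_compat; [apply Rmult_le_pos |]; lra.
  - apply (proj1 (Rdiv_le_1 _ _ Hden)). unfold den. lra.
Qed.

Lemma tan_log_derivative_phi_ge (t r : R) : 0 <= t <= 1 -> 0 < r < PI / 2 ->
  tan r * Derive_n (phi t) 1 r / phi t r >= Rmax t (1 - t).
Proof.
  intros Ht Hr.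
  assert (sin r <> 0) by (apply Rgt_not_eq, sin_gt_0; lra).
  assert (cos r <> 0) by (apply Rgt_not_eq, cos_gt_0; lra).
  rewrite tan_log_derivative_phi by assumption.
  pose proof (kappa_sin2_div_den_bounds t r). pose proof (beta_bounds t Ht).
  pose proof (Rmax_le_1_sub_mul t). unfold beta in *. nra.
Qed.

Lemma phi_neg_second_log_derivative_ge (t r : R) : 0 <= t <= 1 -> 0 < r < PI / 2 ->
  - Derive_n (phi t) 2 r / phi t r >= tan r * Derive_n (phi t) 1 r / phi t r.
Proof.
  intros Ht Hr. apply Rminus_ge.
  assert (sin r <> 0) by (apply Rgt_not_eq, sin_gt_0; lra).
  assert (cos r <> 0) by (apply Rgt_not_eq, cos_gt_0; lra).
  rewrite phi_curvature_gap by assumption.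
  pose proof (beta_bounds t Ht). pose proof (kappa_ge0 t). pose proof (den_pos t r).
  pose proof (pow2_ge_0 (sin r)). pose proof (pow2_ge_0 (cos r)).
  apply Rle_ge, Rdiv_le_0_compat; [| apply pow_lt; lra].
  assert (0 <= (1 - 2 * beta t) * kappa t * sin r ^ 2)
    by (apply Rmult_le_pos; [apply Rmult_le_pos |]; lra).
  apply Rmult_le_pos; [apply Rmult_le_pos; [apply Rmult_le_pos |] |]; lra.
Qed.

Theorem lemma3p3 :
  exists phi : R -> R -> R,
    family_continuous phi /\
    forall t : R, 0 < t <= 1 ->
      smooth_R (phi t) /\
      (forall r : R, 0 <= r <= PI / 2 -> 0 <= phi t r <= 1) /\
      (* (1) boundary conditions *)
      (forall k : nat, Derive_n (phi t) (2 * k) 0 = 0) /\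
      Derive_n (phi t) 1 0 = 1 /\
      (forall k : nat, Derive_n (phi t) (2 * k + 1) (PI / 2) = 0) /\
      0 < phi t (PI / 2) /\
      (* (2) *)
      (forall r : R, t < r <= PI / 2 -> phi t r <= 3 * t * sin r) /\
      (* (3) *)
      (forall r : R, 0 < r < PI / 2 ->
         - Derive_n (phi t) 2 r / phi t r
           >= tan r * Derive_n (phi t) 1 r / phi t r /\
         tan r * Derive_n (phi t) 1 r / phi t r >= Rmax t (1 - t)).
Proof.
  exists phi. split; [rewrite phi_eval; apply family_continuous_eval |].
  intros t Ht.
  assert (Hsmooth : smooth_R (phi t)) by (rewrite phi_eval; apply smooth_R_eval).
  split; [exact Hsmooth |].
  split; [intros r Hr; apply phi_range; lra |].
  split; [intros k; apply odd_fun_Derive_n_even_0; [exact Hsmooth | apply phi_odd] |].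
  split; [apply Derive_phi_0 |].
  split; [intros k; apply symmetric_fun_Derive_n_odd_center;
          [exact Hsmooth | apply phi_symmetric_PI2] |].
  split; [apply phi_PI2_pos |].
  split; [intros r Hr; apply phi_le_3t_sin; assumption |].
  intros r Hr. split.
  - apply phi_neg_second_log_derivative_ge; lra.
  - apply tan_log_derivative_phi_ge; lra.
Qed.
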